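(* Let $n\ge1$, $p$ a prime, and for $m\ge1$ let $Y_m$ be the subspace of $\Sigma(n,p)$ spanned by all $\overline{B}_q$ where $q$ has at least $m$ components. Then for every $m\ge1$, $Y_m\,\mathcal{R}(n,p)\subseteq Y_{m+1}$, where $\mathcal{R}(n,p)$ is the radical of $\Sigma(n,p)$.
   Context: A composition of $n$ is a sequence of positive integers with sum $n$. The descent algebra $\Sigma_n$ has basis $\{B_q\}$ indexed by compositions of $n$ with multiplication $B_qB_r=\sum_{Z\in S(q,r)}B_{c(Z)}$, where for $q=[a_1,\dots,a_s]$, $r=[b_1,\dots,b_t]$, $S(q,r)$ is the set of $s\times t$ non-negative integer matrices with row sums $a_i$ and column sums $b_j$, and $c(Z)$ is the composition obtained by reading the entries of $Z$ row by row and omitting zeros. Let $\mathcal{Z}_n$ be the subring of integral combinations of the $B_q$ and $\Sigma(n,p)=\mathcal{Z}_n/p\mathcal{Z}_n$, an $\mathbb{F}_p$-algebra with basis $\overline{B}_q$ (images of $B_q$); $\mathcal{R}(n,p)$ denotes its (Jacobson) radical. For a subspace $Y$ and ideal $\mathcal{R}$, $Y\mathcal{R}$ denotes the span of all products $yx$ with $y\in Y$, $x\in\mathcal{R}$. *)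

From HB Require Import structures.
From mathcomp Require Import all_boot all_order all_algebra.
Set Implicit Arguments. Unset Strict Implicit. Unset Printing Implicit Defensive.
Import GRing.Theory.
Local Open Scope ring_scope.

Definition is_comp (n : nat) (s : seq nat) : bool :=
  all (fun a => 0 < a)%N s && (sumn s == n).

Fixpoint seqs_upto (k b : nat) : seq (seq nat) :=
  match k with
  | 0 => [:: [::]]
  | k'.+1 => [::] :: [seq a :: s | a <- iota 0 b.+1, s <- seqs_upto k' b]
  end.

Definition comps_list (n : nat) : seq (seq nat) :=
  undup (filter (is_comp n) (seqs_upto n n)).

Lemma mem_seqs_upto k b s :
  (size s <= k)%N -> all (fun a => a <= b)%N s -> s \in seqs_upto k b.
Proof.
elim: k s => [|k IH] [|a s] //.
move=> Hs /andP[Ha Hall].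
have -> : seqs_upto k.+1 b =
  [::] :: [seq x :: y | x <- iota 0 b.+1, y <- seqs_upto k b] by [].
rewrite in_cons; apply/orP; right.
apply: (allpairs_f (fun x y => x :: y)).
  by rewrite mem_iota add0n ltnS.
exact: IH.
Qed.

Lemma mem_comps_list n s : (s \in comps_list n) = is_comp n s.
Proof.
rewrite /comps_list mem_undup mem_filter.
case Hc: (is_comp n s) => //=.
move: Hc => /andP[Hpos /eqP Hsum].
apply: mem_seqs_upto.
  rewrite -Hsum; elim: s Hpos {Hsum} => //= a s IH /andP[Ha Hs].
  by rewrite -addn1 addnC leq_add // IH.
apply/allP => a Ha; rewrite -Hsum.
elim: s Ha {Hpos Hsum} => //= b s IH; rewrite in_cons => /orP[/eqP->|H].
  exact: leq_addr.
by rewrite (leq_trans (IH H)) // leq_addl.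
Qed.

Definition comp (n : nat) := seq_sub (comps_list n).

(* Structure constants: B_q B_r = \sum_{Z in S(q,r)} B_{c(Z)}.         *)
(* Entries of Z in S(q,r) are bounded by n (row sums are parts of q),  *)
(* so Z ranges over (size q) x (size r) matrices with entries in 'I_n.+1. *)
Section Descent.
Variable n : nat.

Definition row_sums s t (Z : 'M['I_n.+1]_(s, t)) : seq nat :=
  [seq (\sum_(j < t) (Z i j : nat))%N | i <- enum 'I_s].
Definition col_sums s t (Z : 'M['I_n.+1]_(s, t)) : seq nat :=
  [seq (\sum_(i < s) (Z i j : nat))%N | j <- enum 'I_t].
Definition read_Z s t (Z : 'M['I_n.+1]_(s, t)) : seq nat :=
  [seq a <- flatten [seq [seq (Z i j : nat) | j <- enum 'I_t] | i <- enum 'I_s]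
   | a != 0%N].

Definition struct_const (q r w : seq nat) : nat :=
  #|[pred Z : 'M['I_n.+1]_(size q, size r) |
      [&& row_sums Z == q, col_sums Z == r & read_Z Z == w]]|.

Variable p : nat.
Local Notation Sigma := {ffun comp n -> 'F_p}.

Definition sscale (c : 'F_p) (x : Sigma) : Sigma := [ffun w => c * x w].

Definition Bq (q : comp n) : Sigma := [ffun w => (w == q)%:R].

(* bilinear extension of B_q B_r = sum_{Z in S(q,r)} B_{c(Z)}, reduced mod p *)
Definition smul (u v : Sigma) : Sigma :=
  [ffun w : comp n => \sum_(q : comp n) \sum_(r : comp n)
      u q * v r * (struct_const (val q) (val r) (val w))%:R].

Definition left_ideal (L : {set Sigma}) : bool :=
  [&& 0 \in L,
      [forall x in L, forall y in L, x + y \in L],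
      [forall c : 'F_p, forall x in L, sscale c x \in L] &
      [forall a : Sigma, forall x in L, smul a x \in L]].

Definition max_left_ideal (L : {set Sigma}) : bool :=
  [&& left_ideal L, L != setT &
      [forall L' : {set Sigma},
         (left_ideal L' && (L \subset L') && (L' != setT)) ==> (L' == L)]].

Definition radical : {set Sigma} := \bigcap_(L | max_left_ideal L) L.

Definition span (S : {set Sigma}) : {set Sigma} :=
  [set v | [exists c : {ffun Sigma -> 'F_p}, v == \sum_(x in S) sscale (c x) x]].

Definition Y (m : nat) : {set Sigma} :=
  span [set Bq q | q : comp n & (m <= size (val q))%N].

Definition span_prod (A B : {set Sigma}) : {set Sigma} :=
  span [set smul y x | y in A, x in B].

End Descent.

(* For a composition w, let θ_w send B_u to the number of Z in S(w,u) with
   c(Z) = w, i.e. to the number of maps from the parts of w to the parts of u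
   whose fibres sum to the parts of u.  Counting maps from the parts of w into
   the cells of the matrices Z in S(q,r) shows that θ_w is multiplicative, so
   θ_w : Σ(n,p) -> F_p is an algebra map with θ_w(B_[n]) = 1; its kernel is a
   maximal left ideal and θ_w vanishes on the radical.  On the other hand c(Z)
   has at least as many parts as q, with equality only if c(Z) = q.  Hence for
   y in Y_m, x in the radical and |w| <= m, the B_w-coordinate of yx reduces to
   y_w θ_w(x) = 0. *)

From Pilot Require Import Defs.
From mathcomp Require Import all_boot all_order all_algebra.
From mathcomp Require Import ring.
Set Implicit Arguments. Unset Strict Implicit. Unset Printing Implicit Defensive.
Import GRing.Theory.

Lemma sum1_ord k : \sum_(i < k) 1 = k.
Proof. by rewrite sum1_card card_ord. Qed.

Lemma sumn_map_enum k (F : 'I_k -> nat) :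
  sumn [seq F i | i <- enum 'I_k] = \sum_(i < k) F i.
Proof. by rewrite sumnE big_map big_enum. Qed.

Lemma sumn_filter_neq0 (s : seq nat) : sumn [seq a <- s | a != 0] = sumn s.
Proof. by elim: s => //= a s IH; case: eqP => [->|_] //=; rewrite IH. Qed.

Lemma map_enum_ordP k (F : 'I_k -> nat) s :
  reflect (size s = k /\ forall i, F i = nth 0 s i) ([seq F i | i <- enum 'I_k] == s).
Proof.
apply: (iffP eqP).
  move=> <-; split; first by rewrite size_map size_enum_ord.
  by move=> i; rewrite (nth_map i) ?nth_ord_enum // size_enum_ord.
move=> [hs hF]; apply: (eq_from_nth (x0 := 0)); first by rewrite size_map size_enum_ord.
move=> j; rewrite size_map size_enum_ord => hj.
rewrite (nth_map (Ordinal hj)) ?size_enum_ord //.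
by have := nth_ord_enum (Ordinal hj) (Ordinal hj) => /= ->; exact: hF.
Qed.

Section FiberMaps.
Variable w : seq nat.
Hypothesis w_gt0 : all (fun a => 0 < a) w.
Local Notation k := (size w).

Definition part (i : 'I_k) := nth 0 w i.

Lemma part_gt0 i : 0 < part i.
Proof. by apply: (all_nthP 0 w_gt0); rewrite ltn_ord. Qed.

Lemma sum_part : \sum_(i < k) part i = sumn w.
Proof. by rewrite sumnE (big_nth 0) big_mkord. Qed.

Definition fiber_sums (A : finType) (U : A -> nat) (f : {ffun 'I_k -> A}) :=
  [forall a, \sum_(i | f i == a) part i == U a].

Definition count_fiber_maps (A : finType) (U : A -> nat) :=
  #|[pred f | fiber_sums U f]|.

Lemma part_le_fiber (A : finType) (f : {ffun 'I_k -> A}) i :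
  part i <= \sum_(j | f j == f i) part j.
Proof. by rewrite (bigD1 i) //= leq_addr. Qed.

Lemma count_fiber_maps_inj (A B : finType) (phi : A -> B) (UA : A -> nat) (UB : B -> nat) :
  injective phi -> (forall a, UB (phi a) = UA a) ->
  (forall b, UB b != 0 -> exists a, b = phi a) ->
  count_fiber_maps UA = count_fiber_maps UB.
Proof.
move=> phiI hU hR.
pose push (f : {ffun 'I_k -> A}) := [ffun i => phi (f i)].
have pushI : injective push.
  move=> f g /ffunP H; apply/ffunP => i; have := H i; rewrite !ffunE; exact: phiI.
rewrite /count_fiber_maps -(card_imset _ pushI); apply: eq_card => g /=.
rewrite inE; apply/imsetP/idP; last first.
- move=> /forallP gU.
  have hx i : exists a, g i = phi a.
    apply: hR; move: (gU (g i)) => /eqP <-.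
    by rewrite -lt0n (leq_trans (part_gt0 i)) // part_le_fiber.
  have [f0 hf0] := fin_all_exists hx.
  exists (finfun f0).
    rewrite inE; apply/forallP => a; move: (gU (phi a)); rewrite hU => /eqP <-.
    by apply/eqP; apply: eq_bigl => i; rewrite ffunE hf0 (inj_eq phiI).
  by apply/ffunP => i; rewrite !ffunE hf0.
- move=> [f]; rewrite inE => /forallP fU ->; apply/forallP => b.
  case: (pickP (fun a => phi a == b)) => [a /eqP <- | none].
    rewrite hU -(eqP (fU a)); apply/eqP; apply: eq_bigl => i.
    by rewrite ffunE (inj_eq phiI).
  rewrite big_pred0; last by move=> i; rewrite ffunE none.
  have [/eqP -> // | /hR [a Ha]] := boolP (UB b == 0).
  by move: (none a); rewrite Ha eqxx.
Qed.
End FiberMaps.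

Section Rows.
Variables n s t : nat.
Implicit Type Z : 'M['I_n.+1]_(s, t).

Definition row_sum Z (i : 'I_s) := \sum_(j < t) (Z i j : nat).
Definition col_sum Z (j : 'I_t) := \sum_(i < s) (Z i j : nat).
Definition row_nz Z (i : 'I_s) := [seq a <- [seq (Z i j : nat) | j <- enum 'I_t] | a != 0].

Lemma read_Z_flatten Z : read_Z Z = flatten [seq row_nz Z i | i <- enum 'I_s].
Proof. by rewrite /read_Z filter_flatten -map_comp. Qed.

Lemma sumn_row_nz Z i : sumn (row_nz Z i) = row_sum Z i.
Proof. by rewrite /row_nz sumn_filter_neq0 sumn_map_enum. Qed.

Lemma size_read_Z Z : size (read_Z Z) = \sum_(i < s) size (row_nz Z i).
Proof. by rewrite read_Z_flatten size_flatten /shape -map_comp sumn_map_enum. Qed.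

Lemma sumn_read_Z Z : sumn (read_Z Z) = \sum_(i < s) row_sum Z i.
Proof.
rewrite read_Z_flatten sumn_flatten -map_comp -sumn_map_enum; congr sumn.
by apply: eq_map => i /=; rewrite sumn_row_nz.
Qed.

Lemma read_Z_gt0 Z : all (fun a => 0 < a) (read_Z Z).
Proof. by apply/allP => a; rewrite mem_filter lt0n => /andP[]. Qed.

Lemma size_row_nz_gt0 Z i : 0 < row_sum Z i -> 0 < size (row_nz Z i).
Proof. by rewrite -sumn_row_nz; case: (row_nz Z i). Qed.

Lemma size_read_Z_eq Z : (forall i, 0 < row_sum Z i) -> size (read_Z Z) <= s ->
  forall i, size (row_nz Z i) = 1.
Proof.
move=> hp hs.
have : \sum_(i < s) (size (row_nz Z i) - 1) == 0.
  rewrite sumnB; last by move=> i _; exact: size_row_nz_gt0.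
  by rewrite sum1_ord -size_read_Z subn_eq0.
rewrite sum_nat_eq0 => /forallP H i.
by apply/eqP; rewrite eqn_leq -subn_eq0 (implyP (H i)) // size_row_nz_gt0.
Qed.

Lemma row_nz1 Z i : size (row_nz Z i) = 1 -> row_nz Z i = [:: row_sum Z i].
Proof. by move: (sumn_row_nz Z i); case: (row_nz Z i) => // a [] //= <- _; rewrite addn0. Qed.

Lemma row_nz1_support Z i : size (row_nz Z i) = 1 ->
  exists j, (Z i j : nat) = row_sum Z i /\ forall j', j' != j -> (Z i j' : nat) = 0.
Proof.
move=> h; have := row_nz1 h; move: h; rewrite /row_nz filter_map size_map.
case E: [seq x <- enum 'I_t | (fun a : nat => a != 0) (Z i x : nat)] => [//|j [|//]] /= _ [<-].
exists j; split => // j' nj; apply/eqP; apply/negPn/negP => nz.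
have : j' \in [seq x <- enum 'I_t | (fun a : nat => a != 0) (Z i x : nat)].
  by rewrite mem_filter nz mem_enum.
by rewrite E inE (negbTE nj).
Qed.
End Rows.

(* Each part of q is a row sum of Z, hence contributes at least one part to
   c(Z); so c(Z) is longer than q unless every row has a single nonzero entry. *)
Lemma struct_const_size_leq n (q r u : seq nat) : all (fun a => 0 < a) q ->
  0 < struct_const n q r u -> size u <= size q -> u = q.
Proof.
move=> q_gt0 /card_gt0P [Z]; rewrite inE => /and3P [/map_enum_ordP [_ hrow] _ /eqP <-] hs.
have hp i : 0 < row_sum Z i.
  by rewrite /row_sum hrow; apply: (all_nthP 0 q_gt0); rewrite ltn_ord.
have h1 := size_read_Z_eq hp hs.
rewrite read_Z_flatten; under eq_map do rewrite row_nz1 ?h1 //.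
by rewrite flatten_map1; apply/eqP/map_enum_ordP.
Qed.

Section Diagonal.
Variables (n : nat) (w : seq nat).
Hypothesis w_gt0 : all (fun a => 0 < a) w.
Hypothesis sumn_w : sumn w = n.
Local Notation k := (size w).

Lemma part_leq (i : 'I_k) : part i <= n.
Proof. by rewrite -sumn_w -sum_part (bigD1 i) //= leq_addr. Qed.

Variable u : seq nat.
Local Notation t := (size u).

Definition mx_of_map (f : {ffun 'I_k -> 'I_t}) : 'M['I_n.+1]_(k, t) :=
  \matrix_(i, j) (if f i == j then inord (part i) else ord0).

Lemma mx_of_mapE f i j : (mx_of_map f i j : nat) = if f i == j then part i else 0.
Proof. by rewrite mxE; case: eqP => _ //; rewrite inordK // ltnS part_leq. Qed.

Lemma mx_of_map_inj : injective mx_of_map.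
Proof.
move=> f g H; apply/ffunP => i.
have := congr1 (fun Z : 'M['I_n.+1]_(k, t) => (Z i (f i) : nat)) H.
rewrite /= !mx_of_mapE eqxx; case: eqP => [//|_] h.
by move: (part_gt0 w_gt0 i); rewrite h.
Qed.

Lemma row_sum_mx_of_map f i : row_sum (mx_of_map f) i = part i.
Proof.
rewrite /row_sum (eq_bigr (fun j => if f i == j then part i else 0)) => [|j _]; last first.
  by rewrite mx_of_mapE.
rewrite -big_mkcond /= (eq_bigl (fun j => j == f i)) => [|j]; last by rewrite eq_sym.
by rewrite big_pred1_eq.
Qed.

Lemma col_sum_mx_of_map f j : col_sum (mx_of_map f) j = \sum_(i | f i == j) part i.
Proof.
rewrite /col_sum (eq_bigr (fun i => if f i == j then part i else 0)) => [|i _].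
  by rewrite -big_mkcond.
by rewrite mx_of_mapE.
Qed.

Lemma read_mx_of_map f : read_Z (mx_of_map f) = w.
Proof.
rewrite read_Z_flatten.
have -> : [seq row_nz (mx_of_map f) i | i <- enum 'I_k] = [seq [:: part i] | i <- enum 'I_k].
  apply: eq_map => i; rewrite /row_nz.
  under eq_map do rewrite mx_of_mapE.
  rewrite filter_map (eq_filter (a2 := pred1 (f i))) => [|j /=]; last first.
    by rewrite [j == f i]eq_sym; case: (f i == j); rewrite //= -lt0n part_gt0.
  by rewrite filter_pred1_uniq ?enum_uniq ?mem_enum //= eqxx.
by rewrite flatten_map1; apply/eqP/map_enum_ordP.
Qed.

(* The matrices Z in S(w,u) with c(Z) = w are exactly those with one nonzero
   entry per row, i.e. the graphs of maps from the parts of w to those of u. *)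
Lemma struct_const_diag : struct_const n w u w = count_fiber_maps w (fun j : 'I_t => nth 0 u j).
Proof.
rewrite /struct_const /count_fiber_maps -(card_imset _ mx_of_map_inj).
apply: eq_card => Z; rewrite inE; apply/idP/imsetP.
- move=> /and3P [/map_enum_ordP [_ hr] /map_enum_ordP [_ hc] /eqP hrd].
  have hp i : 0 < row_sum Z i by rewrite /row_sum hr part_gt0.
  have h1 := size_read_Z_eq hp (eq_leq (congr1 size hrd)).
  have [f0 hf0] := fin_all_exists (fun i => row_nz1_support (h1 i)).
  have hZ : Z = mx_of_map (finfun f0).
    apply/matrixP => i j; apply: val_inj; rewrite /= mx_of_mapE ffunE.
    have [e1 e2] := hf0 i; case: eqP => [<-|ne]; first by rewrite e1 /row_sum hr.
    by apply: e2; apply/eqP => E; apply: ne.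
  exists (finfun f0) => //; rewrite inE; apply/forallP => j.
  by rewrite -hc -col_sum_mx_of_map -hZ.
- move=> [f]; rewrite inE => /forallP hf ->; apply/and3P; split.
  + by apply/map_enum_ordP; split => // i; exact: row_sum_mx_of_map.
  + apply/map_enum_ordP; split => // j.
    by have := col_sum_mx_of_map f j; rewrite /col_sum => ->; exact/eqP/hf.
  + by rewrite read_mx_of_map.
Qed.
End Diagonal.

Section Regroup.
Variables (n : nat) (q r : seq nat).
Hypothesis q_comp : is_comp n q.
Local Notation s := (size q).
Local Notation t := (size r).

Definition in_S (Z : 'M['I_n.+1]_(s, t)) := (row_sums Z == q) && (col_sums Z == r).

Lemma read_Z_comp (Z : 'M['I_n.+1]_(s, t)) : in_S Z -> read_Z Z \in comps_list n.
Proof.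
move=> /andP [/eqP hr _]; rewrite mem_comps_list /is_comp read_Z_gt0 /=.
move: q_comp => /andP [_ /eqP hs].
by rewrite sumn_read_Z -sumn_map_enum -[map _ _]/(row_sums Z) hr hs.
Qed.

Lemma sum_struct_const (G : seq nat -> nat) :
  \sum_(u : Defs.comp n) struct_const n q r (val u) * G (val u) =
  \sum_(Z : 'M['I_n.+1]_(s, t) | in_S Z) G (read_Z Z).
Proof.
rewrite /struct_const; under eq_bigr do rewrite -sum1_card big_distrl /=.
rewrite (exchange_big_dep in_S) /= => [|u Z _ /and3P [h1 h2 _]]; last by rewrite /in_S h1 h2.
apply: eq_bigr => Z hZ.
rewrite (eq_bigl (fun u => u == SeqSub (read_Z_comp hZ))) => [|u].
  by rewrite big_pred1_eq mul1n.
rewrite inE; have /andP [-> ->] /= := hZ.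
by apply/eqP/eqP => [h|->]; first exact: val_inj.
Qed.
End Regroup.

Section CellMaps.
Variables (n : nat) (w : seq nat).
Hypothesis w_gt0 : all (fun a => 0 < a) w.
Hypothesis sumn_w : sumn w = n.
Local Notation k := (size w).

Lemma count_fiber_maps_read_Z s t (Z : 'M['I_n.+1]_(s, t)) :
  count_fiber_maps w (fun j : 'I_(size (read_Z Z)) => nth 0 (read_Z Z) j) =
  count_fiber_maps w (fun ij : 'I_s * 'I_t => (Z ij.1 ij.2 : nat)).
Proof.
set Zf := fun ij : 'I_s * 'I_t => (Z ij.1 ij.2 : nat).
set L := [seq (i, j) | i <- enum 'I_s, j <- enum 'I_t].
set P := [seq ij <- L | Zf ij != 0].
have hread : read_Z Z = [seq Zf ij | ij <- P].
  have hL : [seq Zf ij | ij <- L] =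
    flatten [seq [seq (Z i j : nat) | j <- enum 'I_t] | i <- enum 'I_s].
    by rewrite /L map_allpairs.
  by rewrite /read_Z -hL filter_map.
have hsz : size (read_Z Z) = size P by rewrite hread size_map.
have uP : uniq P.
  apply/filter_uniq/allpairs_uniq; rewrite ?enum_uniq //.
  by move=> [a b] [c d] _ _ /=.
have nthI : injective (tnth (in_tuple P)) by apply/tuple_uniqP.
pose phi j := tnth (in_tuple P) (cast_ord hsz j).
apply: (count_fiber_maps_inj w_gt0 (phi := phi)).
- by move=> j1 j2 /nthI /cast_ord_inj.
- move=> j; transitivity (nth 0 [seq Zf ij | ij <- P] j); last by rewrite -hread.
  rewrite (nth_map (phi j)) -?hsz //.
  by rewrite /phi (tnth_nth (phi j)) /=; congr Zf; apply: set_nth_default; rewrite -hsz.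
- move=> b nz.
  have bP : b \in P.
    by rewrite mem_filter nz; case: b {nz} => i j; apply: allpairs_f; rewrite mem_enum.
  have hi : index b P < size (read_Z Z) by rewrite hsz index_mem.
  by exists (Ordinal hi); rewrite /phi (tnth_nth b) /= nth_index.
Qed.

Variables s t : nat.
Implicit Type F : {ffun 'I_k -> 'I_s * 'I_t}.

Definition mx_of_cellmap F : 'M['I_n.+1]_(s, t) :=
  \matrix_(i, j) inord (\sum_(l | F l == (i, j)) part l).

Lemma mx_of_cellmapE F i j : (mx_of_cellmap F i j : nat) = \sum_(l | F l == (i, j)) part l.
Proof.
rewrite mxE inordK // ltnS -sumn_w -sum_part.
by rewrite [X in _ <= X](bigID (fun l => F l == (i, j))) /= leq_addr.
Qed.

Lemma fiber_sums_entries F (Z : 'M['I_n.+1]_(s, t)) :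
  fiber_sums (fun ij : 'I_s * 'I_t => (Z ij.1 ij.2 : nat)) F = (mx_of_cellmap F == Z).
Proof.
apply/forallP/eqP => [H | <- [i j]]; last by rewrite /= mx_of_cellmapE.
apply/matrixP => i j; apply: val_inj; rewrite /= mx_of_cellmapE.
exact/eqP/(H (i, j)).
Qed.

Lemma sum_count_fiber_maps (SP : pred 'M['I_n.+1]_(s, t)) :
  \sum_(Z | SP Z) count_fiber_maps w (fun ij : 'I_s * 'I_t => (Z ij.1 ij.2 : nat)) =
  #|[pred F | SP (mx_of_cellmap F)]|.
Proof.
rewrite -sum1_card (partition_big mx_of_cellmap SP) //=.
apply: eq_bigr => Z hZ; rewrite /count_fiber_maps -sum1_card; apply: eq_bigl => F.
by rewrite !inE fiber_sums_entries; case: eqP => [->|_]; rewrite ?hZ ?andbF.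
Qed.

Lemma row_sum_mx_of_cellmap F i : row_sum (mx_of_cellmap F) i = \sum_(l | (F l).1 == i) part l.
Proof.
rewrite /row_sum (eq_bigr (fun j => \sum_(l | F l == (i, j)) part l)) => [|j _]; last first.
  exact: mx_of_cellmapE.
under eq_bigr do rewrite big_mkcond /=.
rewrite exchange_big /= [RHS]big_mkcond /=; apply: eq_bigr => l _.
have [E|E] := eqVneq (F l).1 i.
  rewrite (bigD1 (F l).2) //= -{1}E -surjective_pairing eqxx big1 ?addn0 // => j nj.
  by case: eqP => // h; move: nj; rewrite h eqxx.
by apply: big1 => j _; case: eqP => // h; move: E; rewrite h eqxx.
Qed.

Lemma col_sum_mx_of_cellmap F j : col_sum (mx_of_cellmap F) j = \sum_(l | (F l).2 == j) part l.
Proof.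
rewrite /col_sum (eq_bigr (fun i => \sum_(l | F l == (i, j)) part l)) => [|i _]; last first.
  exact: mx_of_cellmapE.
under eq_bigr do rewrite big_mkcond /=.
rewrite exchange_big /= [RHS]big_mkcond /=; apply: eq_bigr => l _.
have [E|E] := eqVneq (F l).2 j.
  rewrite (bigD1 (F l).1) //= -{1}E -surjective_pairing eqxx big1 ?addn0 // => i ni.
  by case: eqP => // h; move: ni; rewrite h eqxx.
by apply: big1 => i _; case: eqP => // h; move: E; rewrite h eqxx.
Qed.
End CellMaps.

Lemma card_ffun_pair k s t (PA : pred {ffun 'I_k -> 'I_s}) (PB : pred {ffun 'I_k -> 'I_t}) :
  #|[pred F : {ffun 'I_k -> 'I_s * 'I_t} |
      PA [ffun i => (F i).1] && PB [ffun i => (F i).2]]| = #|PA| * #|PB|.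
Proof.
pose pairF (fg : {ffun 'I_k -> 'I_s} * {ffun 'I_k -> 'I_t}) := [ffun i => (fg.1 i, fg.2 i)].
have pairF_inj : injective pairF.
  move=> [f1 g1] [f2 g2] /ffunP H; congr pair; apply/ffunP => i;
  by have := H i; rewrite !ffunE => -[].
rewrite -cardX -(card_imset _ pairF_inj); apply: eq_card => F; rewrite !inE.
apply/idP/imsetP => [/andP [hf hg] | [[f g]]].
  exists ([ffun i => (F i).1], [ffun i => (F i).2]); first by rewrite inE; apply/andP.
  by apply/ffunP => i; rewrite !ffunE -surjective_pairing.
rewrite inE /= => /andP [hf hg] ->.
have -> : [ffun i => (pairF (f, g) i).1] = f by apply/ffunP => i; rewrite !ffunE.
have -> : [ffun i => (pairF (f, g) i).2] = g by apply/ffunP => i; rewrite !ffunE.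
exact/andP.
Qed.

Section Multiplicative.
Variables (n : nat) (w : seq nat).
Hypothesis w_gt0 : all (fun a => 0 < a) w.
Hypothesis sumn_w : sumn w = n.
Local Notation k := (size w).
Variables q r : seq nat.
Hypothesis q_comp : is_comp n q.
Local Notation s := (size q).
Local Notation t := (size r).

Lemma in_S_mx_of_cellmap (F : {ffun 'I_k -> 'I_s * 'I_t}) :
  @in_S n q r (mx_of_cellmap n F) =
  fiber_sums (fun i : 'I_s => nth 0 q i) [ffun l => (F l).1] &&
  fiber_sums (fun j : 'I_t => nth 0 r j) [ffun l => (F l).2].
Proof.
rewrite /in_S; congr andb.
  apply/map_enum_ordP/forallP => [[_ H] i | H].
    by under eq_bigl do rewrite ffunE; rewrite -(row_sum_mx_of_cellmap sumn_w) -H.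
  split => // i; have := H i; under eq_bigl do rewrite ffunE.
  by rewrite -(row_sum_mx_of_cellmap sumn_w) => /eqP.
apply/map_enum_ordP/forallP => [[_ H] j | H].
  by under eq_bigl do rewrite ffunE; rewrite -(col_sum_mx_of_cellmap sumn_w) -H.
split => // j; have := H j; under eq_bigl do rewrite ffunE.
by rewrite -(col_sum_mx_of_cellmap sumn_w) => /eqP.
Qed.

Lemma struct_const_diag_mul :
  \sum_(u : Defs.comp n) struct_const n q r (val u) * struct_const n w (val u) w =
  struct_const n w q w * struct_const n w r w.
Proof.
rewrite (sum_struct_const r q_comp (fun v => struct_const n w v w)).
under eq_bigr do rewrite (struct_const_diag w_gt0 sumn_w) (count_fiber_maps_read_Z w_gt0).
rewrite (sum_count_fiber_maps sumn_w) !(struct_const_diag w_gt0 sumn_w).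
rewrite /count_fiber_maps -card_ffun_pair.
by apply: eq_card => F; rewrite !inE in_S_mx_of_cellmap.
Qed.
End Multiplicative.

Section Character.
Variables n p : nat.
Local Notation Sigma := {ffun Defs.comp n -> 'F_p}.
Local Open Scope ring_scope.

Lemma comp_is_comp (u : Defs.comp n) : is_comp n (val u).
Proof. by rewrite -mem_comps_list; exact: valP. Qed.

Lemma comp_gt0 (u : Defs.comp n) : all (fun a => 0 < a)%N (val u).
Proof. by case/andP: (comp_is_comp u). Qed.

Lemma sumn_comp (u : Defs.comp n) : sumn (val u) = n.
Proof. by case/andP: (comp_is_comp u) => _ /eqP. Qed.

Definition theta (w : Defs.comp n) (v : Sigma) : 'F_p :=
  \sum_(u : Defs.comp n) v u * (struct_const n (val w) (val u) (val w))%:R.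

Lemma thetaM w (a x : Sigma) : theta w (smul a x) = theta w a * theta w x.
Proof.
rewrite /theta.
transitivity (\sum_(q : Defs.comp n) \sum_(r : Defs.comp n) a q * x r *
   (\sum_(u : Defs.comp n) struct_const n (val q) (val r) (val u) *
      struct_const n (val w) (val u) (val w))%N%:R).
  under eq_bigr do rewrite ffunE mulr_suml.
  rewrite exchange_big /=; apply: eq_bigr => q _.
  under eq_bigr do rewrite mulr_suml.
  rewrite exchange_big /=; apply: eq_bigr => r _.
  rewrite natr_sum mulr_sumr; apply: eq_bigr => u _.
  by rewrite natrM mulrA.
rewrite mulr_suml; apply: eq_bigr => q _; rewrite mulr_sumr; apply: eq_bigr => r _.
rewrite (struct_const_diag_mul (comp_gt0 w) (sumn_comp w) _ (comp_is_comp q)) natrM.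
ring.
Qed.

Lemma thetaD w (x y : Sigma) : theta w (x + y) = theta w x + theta w y.
Proof. by rewrite /theta -big_split; apply: eq_bigr => u _; rewrite ffunE mulrDl. Qed.

Lemma thetaZ w c (x : Sigma) : theta w (sscale c x) = c * theta w x.
Proof. by rewrite /theta mulr_sumr; apply: eq_bigr => u _; rewrite ffunE mulrA. Qed.

Lemma theta0 w : theta w 0 = 0.
Proof. by rewrite /theta big1 // => u _; rewrite ffunE mul0r. Qed.

Hypothesis n_gt0 : (0 < n)%N.

Lemma mem_comps_list_n : [:: n] \in comps_list n.
Proof. by rewrite mem_comps_list /is_comp /= n_gt0 addn0 eqxx. Qed.

Definition comp_n : Defs.comp n := SeqSub mem_comps_list_n.

Lemma struct_const_n (w : Defs.comp n) : struct_const n (val w) [:: n] (val w) = 1%N.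
Proof.
rewrite (struct_const_diag (comp_gt0 w) (sumn_comp w)) /count_fiber_maps.
transitivity #|{ffun 'I_(size (val w)) -> 'I_1}|; last by rewrite card_ffun !card_ord exp1n.
apply: eq_card => f; rewrite !inE; apply/forallP => j /=.
rewrite (eq_bigl predT) => [|i]; last by rewrite [f i]ord1 [j]ord1 eqxx.
by rewrite sum_part sumn_comp [j]ord1.
Qed.

Lemma theta_comp_n w : theta w (Bq p comp_n) = 1.
Proof.
rewrite /theta (bigD1 comp_n) //= big1 ?addr0 => [|u /negbTE nu]; last first.
  by rewrite ffunE nu mul0r.
by rewrite ffunE eqxx mul1r struct_const_n.
Qed.

Definition ker_theta w : {set Sigma} := [set v | theta w v == 0].

Lemma left_ideal_ker_theta w : left_ideal (ker_theta w).
Proof.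
apply/and4P; split; first by rewrite inE theta0.
- apply/forall_inP => x; rewrite inE => /eqP hx.
  by apply/forall_inP => y; rewrite !inE thetaD hx => /eqP ->; rewrite addr0.
- by apply/forallP => c; apply/forall_inP => x; rewrite !inE thetaZ => /eqP ->; rewrite mulr0.
- by apply/forallP => a; apply/forall_inP => x; rewrite !inE thetaM => /eqP ->; rewrite mulr0.
Qed.

(* ker_theta w has codimension one: a left ideal containing it and some x with
   theta w x != 0 contains every a = (a - t x) + t x, t = theta w a / theta w x. *)
Lemma max_left_ideal_ker_theta w : max_left_ideal (ker_theta w).
Proof.
apply/and3P; split; first exact: left_ideal_ker_theta.
  apply/eqP => kerT; have : Bq p comp_n \in ker_theta w by rewrite kerT inE.
  by rewrite inE theta_comp_n oner_eq0.
apply/forallP => L; apply/implyP => /andP [/andP [/and4P [_ addL scaleL _] subL] LnT].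
rewrite eqEsubset subL andbT; apply/subsetP => x xL; rewrite inE.
apply/negPn/negP => nz; move/negP: LnT; apply; apply/eqP/setP => a; rewrite inE.
set t := theta w a / theta w x.
have -> : a = (a + sscale (- t) x) + sscale t x by apply/ffunP => u; rewrite !ffunE; ring.
have h1 : a + sscale (- t) x \in L.
  by apply: (subsetP subL); rewrite inE thetaD thetaZ mulNr divfK // subrr.
have h2 : sscale t x \in L by move/forallP/(_ t)/forall_inP: scaleL; apply.
by move/forall_inP/(_ _ h1)/forall_inP: addL; apply.
Qed.

Lemma theta_radical w x : x \in radical n p -> theta w x = 0.
Proof. by move/bigcapP/(_ _ (max_left_ideal_ker_theta w)); rewrite inE => /eqP. Qed.
End Character.

Section Filtration.
Variables n p : nat.
Local Notation Sigma := {ffun Defs.comp n -> 'F_p}.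
Local Open Scope ring_scope.

Definition vanish_below m (v : Sigma) := forall w : Defs.comp n, (size (val w) < m)%N -> v w = 0.

Lemma span_vanish_below m (S : {set Sigma}) v :
  {in S, forall x, vanish_below m x} -> v \in Defs.span S -> vanish_below m v.
Proof.
move=> SV; rewrite inE => /existsP [c /eqP ->] w hw.
by rewrite sum_ffunE big1 // => x xS; rewrite ffunE (SV x xS w hw) mulr0.
Qed.

Lemma Y_vanish_below m v : v \in Y n p m -> vanish_below m v.
Proof.
apply: span_vanish_below => _ /imsetP [q qm ->] w hw; rewrite ffunE.
case: eqP => // E; move: qm; rewrite inE -E => qm.
by move: (leq_trans hw qm); rewrite ltnn.
Qed.

Lemma Bq_inj : injective (@Bq n p).
Proof.
move=> q1 q2 /ffunP/(_ q1); rewrite !ffunE eqxx.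
by case: eqP => // _ /eqP; rewrite eq_sym oner_eq0.
Qed.

Lemma vanish_below_Y m v : vanish_below m v -> v \in Y n p m.
Proof.
move=> vm; rewrite inE; apply/existsP.
pose c := [ffun x : Sigma => \sum_(q : Defs.comp n) (x == Bq p q)%:R * v q].
have cB q : c (Bq p q) = v q.
  rewrite ffunE (bigD1 q) //= eqxx mul1r big1 ?addr0 // => q' nq.
  by rewrite (inj_eq Bq_inj) eq_sym (negbTE nq) mul0r.
exists c; apply/eqP/ffunP => w; rewrite sum_ffunE big_imset => [|? ? _ _]; last exact: Bq_inj.
under eq_bigr do rewrite /= ffunE cB ffunE.
have [wm | wm] := leqP m (size (val w)).
  rewrite (bigD1 w) ?inE //= eqxx mulr1 big1 ?addr0 // => q /andP [_ nq].
  by rewrite eq_sym (negbTE nq) mulr0.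
rewrite vm // big1 // => q; rewrite inE => qm.
by case: eqP => [E|_]; rewrite ?mulr0 //; rewrite E ltnNge qm in wm.
Qed.

(* Only the term q = w of the B_w-coordinate of y x survives, and it equals
   y_w * theta w x. *)
Lemma smul_radical_vanish_below m (y x : Sigma) : (0 < n)%N ->
  vanish_below m y -> x \in radical n p -> vanish_below m.+1 (smul y x).
Proof.
move=> n_gt0 ym xR w wm; rewrite ffunE (bigD1 w) //= [X in _ + X]big1 ?addr0.
  rewrite -[RHS](mulr0 (y w)) -{2}(theta_radical n_gt0 w xR) /theta mulr_sumr.
  by apply: eq_bigr => r _; rewrite mulrA.
move=> q nq; apply: big1 => r _.
have [qm | mq] := ltnP (size (val q)) m; first by rewrite ym // !mul0r.
have [->|c_gt0] := posnP (struct_const n (val q) (val r) (val w)); first by rewrite mulr0.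
have /val_inj wq : val w = val q.
  by apply: (struct_const_size_leq (comp_gt0 q) c_gt0); rewrite -ltnS (leq_trans wm).
by rewrite wq eqxx in nq.
Qed.
End Filtration.

(* 'F_p is a field for every p, and the inclusion also holds for m = 0. *)
Theorem lemma3p1 (n p : nat) : (0 < n)%N -> prime p ->
  forall m : nat, (0 < m)%N ->
    span_prod (Y n p m) (radical n p) \subset Y n p m.+1.
Proof.
move=> n_gt0 _ m _; apply/subsetP => v vYR; apply: vanish_below_Y.
apply: (span_vanish_below _ vYR) => _ /imset2P [y x yY xR ->].
exact: smul_radical_vanish_below (Y_vanish_below yY) xR.
Qed.
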